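(* A strongly regular graph with parameters $(76,30,8,14)$ does not contain $K_5-e$ as an induced subgraph, where $K_5-e$ is the graph on $5$ vertices obtained from $K_5$ by deleting one edge.
   Context: A graph is strongly regular with parameters $(v,k,\lambda,\mu)$ if it has $v$ vertices, is $k$-regular, adjacent vertices have exactly $\lambda$ common neighbours and distinct non-adjacent vertices have exactly $\mu$ common neighbours. *)

From mathcomp Require Import all_boot.
Set Implicit Arguments. Unset Strict Implicit. Unset Printing Implicit Defensive.

Definition simple_graph (T : finType) (e : rel T) : Prop :=
  symmetric e /\ irreflexive e.

Definition srg (T : finType) (e : rel T) (v k lam mu : nat) : Prop :=
  [/\ simple_graph e,
      #|T| = v,
      (forall x : T, #|[set y | e x y]| = k),
      (forall x y : T, e x y -> #|[set z | e x z && e y z]| = lam)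
    & (forall x y : T, x != y -> ~~ e x y -> #|[set z | e x z && e y z]| = mu)].

Definition K5_minus_e (i j : 'I_5) : bool :=
  (i != j) && ~~ ((val i == 0) && (val j == 1) || (val i == 1) && (val j == 0)).

Definition induced_subgraph (S T : finType) (h : rel S) (e : rel T) : Prop :=
  exists f : S -> T, injective f /\ forall i j, e (f i) (f j) = h i j.

From mathcomp Require Import all_boot.
From mathcomp Require Import zify.

Set Implicit Arguments. Unset Strict Implicit. Unset Printing Implicit Defensive.

(* Let a, b be the non-adjacent pair and c, d, w the triangle of an induced
   K_5 - e.  For a vertex x let alpha(x) and beta(x) count its neighbours in
   {a, b} and in {c, d, w}.  Since alpha(x) <= 2, the integer
   (beta - 1)(beta + alpha - 2) = beta^2 + alpha beta + 2 - alpha - 3 beta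
   is nonnegative, and it equals 2 at each of the five vertices of the K_5 - e.  On the other hand its sum over all vertices
   is determined by the parameters: counting with k and lambda,
   sum beta^2 = 3k + 6 lambda, sum alpha beta = 6 lambda, sum beta = 3k and
   sum alpha = 2k, which for (76, 30, 8, 14) gives 8 < 10. *)

Lemma sum_nat_seq_const (I : Type) (s : seq I) (c : nat) :
  \sum_(i <- s) c = size s * c.
Proof. by rewrite big_const_seq count_predT iter_addn_0 mulnC. Qed.

Lemma sum_nat_bool_card (T : finType) (P : pred T) :
  \sum_x (P x : nat) = #|[set x | P x]|.
Proof.
rewrite -sum1_card [RHS]big_mkcond /=; apply: eq_bigr => x _.
by rewrite inE; case: (P x).
Qed.

Lemma quadratic_count_ineq (a b : nat) : a <= 2 -> a + 3 * b <= b * b + a * b + 2.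
Proof. by case: a => [|[|[|a]]] // _; case: b => [|[|b]] //; nia. Qed.

Section NeighbourCounts.

Variables (T : finType) (e : rel T).

Definition nbr_count (s : seq T) (x : T) : nat := \sum_(y <- s) e y x.

Definition codegree (y z : T) : nat := #|[set x | e y x && e z x]|.

Lemma nbr_count_le_size s x : nbr_count s x <= size s.
Proof.
rewrite /nbr_count -[size s]muln1 -sum_nat_seq_const.
by apply: leq_sum => y _; case: (e y x).
Qed.

Lemma sum_nbr_count_mul s t :
  \sum_x nbr_count s x * nbr_count t x =
  \sum_(y <- s) \sum_(z <- t) codegree y z.
Proof.
rewrite /codegree; under eq_bigr => x _ do rewrite /nbr_count big_distrl /=.
rewrite exchange_big /=; apply: eq_bigr => y _.
under eq_bigr => x _ do rewrite big_distrr /=.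
rewrite exchange_big /=; apply: eq_bigr => z _.
rewrite -sum_nat_bool_card; apply: eq_bigr => x _.
by case: (e y x); case: (e z x).
Qed.

Variables (k lam : nat).
Hypothesis degree_k : forall x, #|[set y | e x y]| = k.
Hypothesis codegree_lam : forall y z, e y z -> codegree y z = lam.

Lemma sum_nbr_count s : \sum_x nbr_count s x = size s * k.
Proof.
rewrite /nbr_count exchange_big /= -sum_nat_seq_const.
by apply: eq_bigr => y _; rewrite sum_nat_bool_card degree_k.
Qed.

Lemma sum_nbr_count_cross s t :
  {in s & t, forall y z, e y z} ->
  \sum_x nbr_count s x * nbr_count t x = size s * size t * lam.
Proof.
move=> adj_st; rewrite sum_nbr_count_mul -mulnA -sum_nat_seq_const.
apply: eq_big_seq => y ys; rewrite -sum_nat_seq_const.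
by apply: eq_big_seq => z zt; apply/codegree_lam/adj_st.
Qed.

Lemma sum_nbr_count_clique s :
  uniq s -> {in s &, forall y z, y != z -> e y z} ->
  \sum_x nbr_count s x * nbr_count s x = size s * (k + (size s).-1 * lam).
Proof.
move=> uniq_s clique_s; rewrite -sum_nat_seq_const.
rewrite sum_nbr_count_mul; apply: eq_big_seq => y ys.
rewrite (bigD1_seq y) //= {1}/codegree.
have -> : [set x | e y x && e y x] = [set x | e y x].
  by apply/setP => x; rewrite !inE andbb.
rewrite degree_k; congr (_ + _).
rewrite -(size_rem ys) rem_filter // -sum_nat_seq_const.
rewrite -big_filter; apply: eq_big_seq => z; rewrite mem_filter => /andP[zy zs].
by apply/codegree_lam/clique_s; rewrite // eq_sym.
Qed.

End NeighbourCounts.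

Lemma leq_sum_excess (T : finType) (A : {set T}) (F G : T -> nat) (c : nat) :
  (forall x, F x <= G x) -> (forall x, x \in A -> F x + c = G x) ->
  \sum_x F x + #|A| * c <= \sum_x G x.
Proof.
move=> leFG eqFG; rewrite -sum_nat_const [X in _ + X]big_mkcond -big_split /=.
apply: leq_sum => x _; case: ifP => [/eqFG-> // | _].
by rewrite addn0.
Qed.

Section InducedK5MinusEdge.

Variables (T : finType) (e : rel T) (f : 'I_5 -> T).
Hypothesis f_inj : injective f.
Hypothesis f_adj : forall i j, e (f i) (f j) = K5_minus_e i j.

Let v (i : nat) := f (inord i).
Definition k5e_pair := [:: v 0; v 1].
Definition k5e_triangle := [:: v 2; v 3; v 4].

Lemma uniq_k5e_triangle : uniq k5e_triangle.
Proof. by rewrite /= !inE !(inj_eq f_inj) -!val_eqE /= !inordK. Qed.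

Lemma k5e_triangle_clique : {in k5e_triangle &, forall y z, y != z -> e y z}.
Proof.
move=> y z; rewrite !inE => /or3P[]/eqP-> /or3P[]/eqP->;
  by rewrite ?eqxx // f_adj /K5_minus_e -!val_eqE /= !inordK.
Qed.

Lemma k5e_pair_triangle_adj : {in k5e_pair & k5e_triangle, forall y z, e y z}.
Proof.
move=> y z; rewrite !inE => /orP[]/eqP-> /or3P[]/eqP->;
  by rewrite f_adj /K5_minus_e -!val_eqE /= !inordK.
Qed.

Lemma k5e_nbr_counts (i : 'I_5) :
  let a := nbr_count e k5e_pair (f i) in let b := nbr_count e k5e_triangle (f i) in
  a + 3 * b + 2 = b * b + a * b + 2.
Proof.
rewrite /nbr_count !big_cons !big_nil /v !f_adj /K5_minus_e.
by case: i => [[|[|[|[|[|?]]]]] ?]; rewrite -!val_eqE /= ?inordK.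
Qed.

End InducedK5MinusEdge.

Theorem mainTheorem9 (T : finType) (e : rel T) :
  srg e 76 30 8 14 -> ~ induced_subgraph K5_minus_e e.
Proof.
case=> [_ card_T deg_30 codegree_8 _] [f [f_inj f_adj]].
pose alpha := nbr_count e (k5e_pair f).
pose beta := nbr_count e (k5e_triangle f).
have : \sum_x (alpha x + 3 * beta x) + #|[set f i | i in 'I_5]| * 2
       <= \sum_x (beta x * beta x + alpha x * beta x + 2).
  apply: leq_sum_excess => [x | _ /imsetP[i _ ->]].
  - exact/quadratic_count_ineq/nbr_count_le_size.
  - exact: k5e_nbr_counts.
rewrite card_imset // card_ord !big_split /= !(sum_nbr_count deg_30).
rewrite (sum_nbr_count_cross codegree_8 (k5e_pair_triangle_adj f_adj)).
rewrite (sum_nbr_count_clique deg_30 codegree_8 (uniq_k5e_triangle f_inj)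
                                                (k5e_triangle_clique f_adj)).
by rewrite !sum_nat_const cardT -cardE card_T.
Qed.
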